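(* Let $K$ be the fractal percolation on $[0,1]$ with parameters $M\in\mathbb{N}_{\geq2}$ and $p\in[0,1]$, with construction steps $K_n$. Then for any $n\in\mathbb{N}_0$, $$\mathbb{E}V_1(K_n)=p^n,\qquad \mathbb{E}V_0(K_n)=(Mp)^n\left(1-\frac{(M-1)p}{M-p}\left[1-\left(\frac pM\right)^n\right]\right).$$
   Context: Fractal percolation on $[0,1]$: $K_0=[0,1]$; given $K_{n-1}$, a union of closed intervals $[iM^{-(n-1)},(i+1)M^{-(n-1)}]$, each such interval is divided into $M$ closed subintervals of length $M^{-n}$, each kept independently (of everything else) with probability $p$; $K_n$ is the union of kept subintervals. $V_1$ is length and $V_0$ the Euler characteristic (number of connected components) of a finite union of compact intervals. *)

From HB Require Import structures.
From mathcomp Require Import all_boot all_order all_algebra.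
From mathcomp Require Import all_classical all_reals all_analysis.
Set Implicit Arguments. Unset Strict Implicit. Unset Printing Implicit Defensive.
Import Order.TTheory GRing.Theory Num.Theory.
Import numFieldNormedType.Exports.
Local Open Scope classical_set_scope.
Local Open Scope ring_scope.

(* Index set of the random coins used up to step n:
   a pair (k, i) with k : 'I_n standing for construction level k+1
   and i : 'I_(M^(k+1)) the index of the interval
   [i M^-(k+1), (i+1) M^-(k+1)] at that level. *)
Definition fpIdx (M n : nat) : finType := {k : 'I_n & 'I_(M ^ k.+1)}.

(* A configuration of the coins: true = the subinterval is kept. *)
Definition fpConf (M n : nat) : finType := {ffun fpIdx M n -> bool}.

Definition fpWeight (R : realType) (M n : nat) (p : R) (w : fpConf M n) : R :=
  \prod_(x : fpIdx M n) (if w x then p else 1 - p).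

Definition fpE (R : realType) (M n : nat) (p : R) (F : fpConf M n -> R) : R :=
  \sum_(w : fpConf M n) fpWeight p w * F w.

(* The level-n interval j survives iff it and all its ancestors at levels
   1..n were kept. *)
Definition fpKept (M n : nat) (w : fpConf M n) (j : 'I_(M ^ n)) : bool :=
  [forall x : fpIdx M n,
     (val (tagged x) == (val j %/ M ^ (n - (val (tag x)).+1))%N) ==> w x].

Definition fpK (R : realType) (M n : nat) (w : fpConf M n) : set R :=
  \bigcup_(j in [set j : 'I_(M ^ n) | fpKept w j])
     [set` `[(val j)%:R / (M%:R ^+ n), (val j).+1%:R / (M%:R ^+ n)]%R].

Definition V1 (R : realType) (A : set R) : R := fine (lebesgue_measure A).

(* V_0 : number of connected components (Euler characteristic of a finite
   union of compact intervals). *)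
Definition components (R : realType) (A : set R) : set (set R) :=
  [set connected_component A x | x in A].
Definition V0 (R : realType) (A : set R) : nat :=
  xget 0%N [set k : nat | (components A #= `I_k)%card].

From HB Require Import structures.
From mathcomp Require Import all_boot all_order all_algebra.
From mathcomp Require Import all_classical all_reals all_analysis.
From mathcomp Require Import ring lra zify.
Set Implicit Arguments. Unset Strict Implicit. Unset Printing Implicit Defensive.
Import Order.TTheory GRing.Theory Num.Theory.
Import numFieldNormedType.Exports.
Local Open Scope ring_scope.

(* A level-n interval j survives iff the n coins on its ancestors (itself included) are all
   kept, so it survives with probability p^n; two neighbours j and j+1 survive together with
   probability p^(2n - c), where c is the number of levels at which they have a common
   ancestor.  K_n is the union of the surviving cells of the grid of mesh M^-n, hence
   V_1(K_n) is the number of survivors divided by M^n, and, each component being a maximal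
   run of consecutive cells, V_0(K_n) is the number of survivors minus the number of
   adjacent surviving pairs.  By linearity E V_1(K_n) = p^n and E V_0(K_n) = (Mp)^n - S_n,
   where the expected number S_n of adjacent surviving pairs satisfies
   S_(n+1) = (M-1) M^n p^(n+2) + p^2 S_n: siblings share the n ancestors of their parent,
   and the other adjacent pairs are the last and first children of adjacent parents. *)

Lemma natr_count (R : pzSemiRingType) (T : Type) (a : pred T) (s : seq T) :
  (count a s)%:R = \sum_(x <- s) (a x)%:R :> R.
Proof. by rewrite -sum1_count natr_sum big_mkcond; apply: eq_bigr => x _; case: (a x). Qed.

Section Expectation.
Variables (R : realType) (M n : nat) (p : R).

Lemma eq_fpE (F G : fpConf M n -> R) : (forall w, F w = G w) -> fpE p F = fpE p G.
Proof. by move=> eFG; apply: eq_bigr => w _; rewrite eFG. Qed.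

Lemma fpEB (F G : fpConf M n -> R) :
  fpE p (fun w => F w - G w) = fpE p F - fpE p G.
Proof. by rewrite /fpE -sumrB; apply: eq_bigr => w _; rewrite mulrBr. Qed.

Lemma fpEMr (F : fpConf M n -> R) (c : R) :
  fpE p (fun w => F w * c) = fpE p F * c.
Proof. by rewrite /fpE mulr_suml; apply: eq_bigr => w _; rewrite mulrA. Qed.

Lemma fpE_count (s : seq nat) (a : fpConf M n -> pred nat) :
  fpE p (fun w => (count (a w) s)%:R) = \sum_(j <- s) fpE p (fun w => (a w j)%:R).
Proof.
rewrite /fpE exchange_big /=; apply: eq_bigr => w _.
by rewrite -mulr_sumr natr_count.
Qed.

Lemma fpE_all_kept (S : {set fpIdx M n}) :
  fpE p (fun w => (S \subset [set x | w x] : bool)%:R) = p ^+ #|S|.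
Proof.
(* Expanding the product of the coinwise sums, each coin outside S contributes p + (1 - p). *)
have factor w : fpWeight p w * (S \subset [set x | w x] : bool)%:R =
    \prod_x ((if w x then p else 1 - p) * (if x \in S then (w x)%:R else 1)).
  rewrite big_split /= -big_mkcond /=; congr (_ * _).
  have [/fintype.subsetP keptS | /fintype.subsetPn[x xS]] := boolP (S \subset [set x | w x]).
    by rewrite big1 // => x /keptS; rewrite inE => ->.
  by rewrite inE => /negbTE wx; rewrite (bigD1 x) //= wx mul0r.
rewrite /fpE (eq_bigr _ (fun w _ => factor w)) -(bigA_distr_bigA
  (fun x (b : bool) => (if b then p else 1 - p) * (if x \in S then b%:R else 1))).
rewrite -prodr_const (big_mkcond (mem S)) /=; apply: eq_bigr => x _.
by rewrite big_bool /=; case: (x \in S); rewrite ?mulr1 ?mulr0 ?addr0 ?mul1r //; ring.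
Qed.

End Expectation.

Section Ancestors.
Variables (M n : nat).
Hypothesis M_gt0 : (0 < M)%N.

Definition ancestor (j : nat) (k : 'I_n) : nat := (j %/ M ^ (n - k.+1))%N.

Lemma ancestor_lt (j : nat) (k : 'I_n) : (j < M ^ n)%N -> (ancestor j k < M ^ k.+1)%N.
Proof. by move=> ltjN; rewrite ltn_divLR ?expn_gt0 ?M_gt0 // -expnD subnKC. Qed.

Definition ancestors (j : nat) : {set fpIdx M n} :=
  [set x | val (tagged x) == ancestor j (tag x)].

Lemma fpKept_ancestors (w : fpConf M n) (j : 'I_(M ^ n)) :
  fpKept w j = (ancestors j \subset [set x | w x]).
Proof. by apply/forallP/fintype.subsetP => kept x; move: (kept x); rewrite !inE => /implyP. Qed.

Definition ancestor_coin (j : nat) (ltjN : (j < M ^ n)%N) (k : 'I_n) : fpIdx M n :=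
  Tagged (fun k : 'I_n => 'I_(M ^ k.+1)) (Ordinal (ancestor_lt k ltjN)).

Lemma ancestor_coin_inj (j : nat) (ltjN : (j < M ^ n)%N) : injective (ancestor_coin ltjN).
Proof. by move=> k1 k2 /(congr1 tag). Qed.

Definition shared_levels (a b : nat) : nat :=
  #|[set k : 'I_n | ancestor a k == ancestor b k]|.

Lemma ancestorsI (a b : nat) (ltaN : (a < M ^ n)%N) :
  ancestors a :&: ancestors b =
  ancestor_coin ltaN @: [set k : 'I_n | ancestor a k == ancestor b k].
Proof.
apply/setP => x; rewrite !inE; apply/idP/imsetP => [|[k + ->]].
  case: x => k i /andP[/eqP ia /eqP ib]; exists k; first by rewrite inE -ia -ib.
  by congr Tagged; apply: val_inj.
by rewrite inE => /eqP eab; rewrite /= eab eqxx.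
Qed.

Lemma card_ancestorsI (a b : nat) : (a < M ^ n)%N ->
  #|ancestors a :&: ancestors b| = shared_levels a b.
Proof. by move=> ltaN; rewrite (ancestorsI b ltaN) card_imset //; apply: ancestor_coin_inj. Qed.

Lemma shared_levels_diag (a : nat) : shared_levels a a = n.
Proof. by rewrite -[RHS]card_ord; apply: eq_card => k; rewrite inE eqxx. Qed.

Lemma card_ancestors (a : nat) : (a < M ^ n)%N -> #|ancestors a| = n.
Proof.
by move=> ltaN; rewrite -[ancestors a]finset.setIid card_ancestorsI // shared_levels_diag.
Qed.

Lemma shared_levels_le (a b : nat) : (shared_levels a b <= n)%N.
Proof. by rewrite -[X in (_ <= X)%N]card_ord max_card. Qed.

End Ancestors.

Definition adjacent_pair_weight (R : pzSemiRingType) (M n : nat) (p : R) (j : nat) : R :=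
  if (j.+1 < M ^ n)%N then p ^+ (n + n - shared_levels M n j j.+1) else 0.

Definition adjacent_weight (R : pzSemiRingType) (M n : nat) (p : R) : R :=
  \sum_(0 <= j < M ^ n) adjacent_pair_weight M n p j.

Section Survivors.
Variables (R : realType) (M n : nat) (p : R).
Hypothesis M_gt0 : (0 < M)%N.

Definition survives (w : fpConf M n) (j : nat) : bool :=
  (j < M ^ n)%N && (ancestors M n j \subset [set x | w x]).

Lemma survives_ge (w : fpConf M n) (j : nat) : (M ^ n <= j)%N -> survives w j = false.
Proof. by rewrite /survives leqNgt => /negbTE->. Qed.

Lemma E_count_survivors :
  fpE p (fun w => (count (survives w) (index_iota 0 (M ^ n)))%:R) = (M ^ n)%:R * p ^+ n.
Proof.
rewrite fpE_count mulr_natl -[(M ^ n)%N in RHS]subn0 -sumr_const_nat.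
apply: eq_big_nat => j /andP[_ ltjN].
by rewrite /survives ltjN fpE_all_kept card_ancestors.
Qed.

Lemma E_count_adjacent :
  fpE p (fun w => (count (fun j => survives w j && survives w j.+1)
                         (index_iota 0 (M ^ n)))%:R) = adjacent_weight M n p.
Proof.
rewrite fpE_count; apply: eq_big_nat => j /andP[_ ltjN].
rewrite /survives /adjacent_pair_weight ltjN; case: ifP => [ltSjN | _].
  under eq_fpE => w do rewrite !andTb -finset.subUset.
  by rewrite fpE_all_kept cardsU !card_ancestors // card_ancestorsI.
by rewrite /fpE big1 // => w _; rewrite andbF mulr0.
Qed.

End Survivors.

Section AdjacentWeight.
Variables (R : numFieldType) (m : nat) (p : R).
Local Notation M := m.+1.

Lemma shared_levelsS (n a b : nat) :
  shared_levels M n.+1 a b = (shared_levels M n (a %/ M) (b %/ M) + (a == b))%N.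
Proof.
rewrite /shared_levels -!sum1_card big_mkcond [in RHS]big_mkcond big_ord_recr /= !inE.
rewrite /ancestor subnn !divn1; congr (_ + _)%N.
by apply: eq_bigr => k _; rewrite !inE /= subSn ?ltn_ord // expnS !divnMA.
Qed.

Lemma divnDMl (r q : nat) : (r < M)%N -> ((r + q * M) %/ M)%N = q.
Proof. by move=> ltrM; rewrite addnC divnMDl // divn_small // addn0. Qed.

Lemma adjacent_pair_weight_inner (n q r : nat) : (q < M ^ n)%N -> (r < m)%N ->
  adjacent_pair_weight M n.+1 p (r + q * M) = p ^+ n.+2.
Proof.
move=> ltqN ltrm; rewrite /adjacent_pair_weight.
have -> : ((r + q * M).+1 < M ^ n.+1)%N.
  rewrite expnSr; apply: (@leq_trans (q.+1 * M)); first by rewrite mulSn; lia.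
  by rewrite leq_mul2r ltqN orbT.
have [ltrM ltSrM] : (r < M)%N /\ (r.+1 < M)%N by lia.
rewrite shared_levelsS -addSn !divnDMl // shared_levels_diag.
by congr (_ ^+ _); lia.
Qed.

Lemma adjacent_pair_weight_boundary (n q : nat) :
  adjacent_pair_weight M n.+1 p (m + q * M) = p ^+ 2 * adjacent_pair_weight M n p q.
Proof.
have lastS : ((m + q * M).+1 = q.+1 * M)%N by rewrite mulSn; lia.
rewrite /adjacent_pair_weight lastS expnSr ltn_pmul2r //; case: ifP => _; last by rewrite mulr0.
rewrite shared_levelsS divnDMl // mulnK // -lastS (ltn_eqF (ltnSn _)) addn0.
rewrite -exprD; congr (_ ^+ _).
by have := shared_levels_le M n q q.+1; lia.
Qed.

Lemma adjacent_weightS (n : nat) :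
  adjacent_weight M n.+1 p = (M ^ n * m)%:R * p ^+ n.+2 + p ^+ 2 * adjacent_weight M n p.
Proof.
rewrite /adjacent_weight expnSr big_nat_mul natrM -mulrA mulr_natl.
rewrite -[X in _ *+ X]subn0 -sumr_const_nat mulr_sumr -big_split /=.
apply: eq_big_nat => q /andP[_ ltqN].
rewrite mulSn -{1}[(q * M)%N]add0n big_addn addnK big_nat_recr //=.
rewrite adjacent_pair_weight_boundary; congr (_ + _).
rewrite -[m in RHS]subn0 mulr_natl -sumr_const_nat.
by apply: eq_big_nat => r /andP[_ ltrm]; rewrite adjacent_pair_weight_inner.
Qed.

Lemma adjacent_weight_closed (n : nat) : M%:R - p != 0 ->
  (M%:R * p) ^+ n - adjacent_weight M n p =
  (M%:R * p) ^+ n * (1 - (M%:R - 1) * p / (M%:R - p) * (1 - (p / M%:R) ^+ n)).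
Proof.
move=> Mp_neq0; have M_neq0 : M%:R != 0 :> R by rewrite pnatr_eq0.
elim: n => [|n IHn].
  by rewrite /adjacent_weight big_nat1 /adjacent_pair_weight /= !expr0 subr0; ring.
rewrite adjacent_weightS -[adjacent_weight M n p](subKr ((M%:R * p) ^+ n)) IHn.
rewrite natrM natrX !exprMn !exprVn !exprS.
have -> : m%:R = M%:R - 1 :> R by rewrite -natr1 addrK.
by field; rewrite expf_neq0 // [1 + _]addrC natr1 M_neq0 Mp_neq0.
Qed.

End AdjacentWeight.

Lemma connected_gap (R : realType) (S : set R) (a b x y : R) :
  connected S -> a < b -> (forall t, a < t < b -> ~ S t) ->
  S x -> S y -> x < b -> a < y -> False.
Proof.
move=> /connected_intervalP S_itv ltab gap Sx Sy ltxb ltay.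
have lexa : x <= a by rewrite leNgt; apply/negP => ltax; apply: (gap x) Sx; rewrite ltax.
have leby : b <= y by rewrite leNgt; apply/negP => ltyb; apply: (gap y) Sy; rewrite ltay.
apply: (gap ((a + b) / 2)); first by apply/andP; split; lra.
by apply: (S_itv x y) => //; apply/andP; split; lra.
Qed.

Section Grid.
Local Open Scope classical_set_scope.
Variables (R : realType) (N : nat) (D : R) (kept : pred nat).
Hypothesis D_gt0 : 0 < D.
Hypothesis kept_ge : forall j, (N <= j)%N -> kept j = false.

Definition grid_block (r e : nat) : set R := [set` `[r%:R / D, e%:R / D]%R].

Definition grid_union : set R := \bigcup_(j in [set j | kept j]) grid_block j j.+1.

Local Notation block := grid_block.
Local Notation union := grid_union.

Lemma grid_blockP (r e : nat) (t : R) : block r e t <-> r%:R / D <= t <= e%:R / D.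
Proof. by rewrite /grid_block /= in_itv. Qed.

Lemma ltr_pdiv2r (x y : R) : (x / D < y / D) = (x < y).
Proof. by rewrite ltr_pM2r ?invr_gt0. Qed.

Lemma ler_pdiv2r (x y : R) : (x / D <= y / D) = (x <= y).
Proof. by rewrite ler_pM2r ?invr_gt0. Qed.

Lemma union_gap_cell (e : nat) (t : R) :
  ~~ kept e -> e%:R / D < t < e.+1%:R / D -> ~ union t.
Proof.
move=> ke /andP[lt_et lt_tS] [j /= kj /grid_blockP/andP[le_jt le_tS]].
have lt_jSe : (j < e.+1)%N by rewrite -(ltr_nat R) -ltr_pdiv2r (le_lt_trans le_jt lt_tS).
have lt_eSj : (e < j.+1)%N by rewrite -(ltr_nat R) -ltr_pdiv2r (lt_le_trans lt_et le_tS).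
have ej : j = e by lia.
by rewrite -ej kj in ke.
Qed.

Definition run_start (r : nat) : bool := kept r && ((r == 0)%N || ~~ kept r.-1).

Lemma union_gap_run_start (r : nat) (t : R) :
  run_start r -> (r%:R - 1) / D < t < r%:R / D -> ~ union t.
Proof.
move=> /andP[_ r_first] /andP[lt_rt lt_tr].
move=> [j /= kj /grid_blockP/andP[le_jt le_tS]].
have lt_jr : (j < r)%N by rewrite -(ltr_nat R) -ltr_pdiv2r (le_lt_trans le_jt lt_tr).
have lt_rSSj : (r < j.+2)%N.
  by rewrite -(ltr_nat R) -[j.+2]addn1 natrD -ltrBlDr -ltr_pdiv2r (lt_le_trans lt_rt le_tS).
have rj : r = j.+1 by lia.
by rewrite rj /= kj in r_first.
Qed.

Definition maximal_run (r e : nat) : Prop :=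
  [/\ run_start r, ~~ kept e, (r <= e)%N & forall i, (r <= i < e)%N -> kept i].

Lemma maximal_run_lt (r e : nat) : maximal_run r e -> (r < e)%N.
Proof.
case=> /andP[kr _] ke le_re _; rewrite ltn_neqAle le_re andbT.
by apply/eqP => er; rewrite -er kr in ke.
Qed.

Lemma block_sub_union (r e : nat) :
  (r < e)%N -> (forall i, (r <= i < e)%N -> kept i) -> block r e `<=` union.
Proof.
move=> lt_re kept_run t /grid_blockP/andP[le_rt le_te].
pose below j := (r <= j < e)%N && (j%:R / D <= t).
have exP : exists j, below j by exists r; rewrite /below leqnn lt_re.
have ubP j : below j -> (j <= e)%N by case/andP=> /andP[_ /ltnW].
case: (ex_maxnP exP ubP) => j /andP[/andP[le_rj lt_je] le_jt] jmax.
exists j; first by apply: kept_run; rewrite le_rj.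
apply/grid_blockP; rewrite le_jt /=.
have [lt_Sje | le_eSj] := ltnP j.+1 e; last by have -> : j.+1 = e by lia.
rewrite leNgt; apply/negP => lt_St.
suff : (j.+1 <= j)%N by rewrite ltnn.
by apply: jmax; rewrite /below (ltW lt_St) lt_Sje andbT (leqW le_rj).
Qed.

Lemma run_end_exists (r : nat) :
  exists e, [/\ ~~ kept e, (r <= e)%N & forall i, (r <= i < e)%N -> kept i].
Proof.
have exP : exists e, (r <= e)%N && ~~ kept e.
  by exists (r + N)%N; rewrite leq_addr kept_ge ?leq_addl.
case: (ex_minnP exP) => e /andP[le_re ke] emin; exists e; split=> // i /andP[le_ri lt_ie].
by apply: contraTT lt_ie => ki; rewrite -leqNgt emin // le_ri.
Qed.

Lemma run_start_exists (j : nat) : kept j ->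
  exists r, [/\ run_start r, (r <= j)%N & forall i, (r <= i <= j)%N -> kept i].
Proof.
elim: j => [|j IHj] kSj.
  by exists 0%N; split=> [|//|i]; [rewrite /run_start kSj | rewrite leqn0 => /eqP->].
have [kj | nkj] := boolP (kept j).
  have [r [rs le_rj kept_rj]] := IHj kj; exists r; split=> [//||i]; first exact: leqW.
  case/andP=> le_ri; rewrite leq_eqVlt ltnS => /orP[/eqP-> // | le_ij].
  by apply: kept_rj; rewrite le_ri.
exists j.+1; split=> [||i]; rewrite ?/run_start ?kSj ?nkj ?orbT //.
by rewrite -eqn_leq => /eqP<-.
Qed.

Lemma in_union_run (t : R) : union t -> exists r e, maximal_run r e /\ block r e t.
Proof.
move=> [j /= kj /grid_blockP/andP[le_jt le_tS]].
have [r [rs le_rj kept_rj]] := run_start_exists kj.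
have [e [ke le_re kept_re]] := run_end_exists r.
have lt_je : (j < e)%N.
  by rewrite ltnNge; apply/negP => le_ej; move: ke; rewrite kept_rj // le_re.
exists r, e; split=> //; apply/grid_blockP.
by rewrite (le_trans _ le_jt) ?(le_trans le_tS) // ler_pdiv2r ler_nat.
Qed.

Lemma connected_component_run (r e : nat) (x : R) :
  maximal_run r e -> block r e x -> connected_component union x = block r e.
Proof.
move=> run bx; have lt_re := maximal_run_lt run.
case: run => start_r ke _ kept_re; have block_union := block_sub_union lt_re kept_re.
apply/seteqP; split; last first.
  apply: connected_component_max => //.
  by apply/connected_intervalP; exact: interval_is_interval.
have Cconn := @component_connected _ union x.
have Cx := connected_component_refl (block_union _ bx).
have Cunion := @connected_component_sub _ union x.
(* The component cannot cross the gaps just left of [r] and just right of [e]. *)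
move: bx => /grid_blockP/andP[le_rx le_xe] y Cy.
apply/grid_blockP/andP; split; rewrite leNgt; apply/negP => lt_y.
  apply: (connected_gap (a := (r%:R - 1) / D) Cconn _ _ Cy Cx lt_y).
  - by rewrite ltr_pdiv2r ltrBlDr ltrDl.
  - by move=> t /(union_gap_run_start start_r) + /Cunion.
  - by apply: lt_le_trans le_rx; rewrite ltr_pdiv2r ltrBlDr ltrDl.
apply: (connected_gap (b := e.+1%:R / D) Cconn _ _ Cx Cy _ lt_y).
- by rewrite ltr_pdiv2r ltr_nat.
- by move=> t /(union_gap_cell ke) + /Cunion.
- by apply: le_lt_trans le_xe _; rewrite ltr_pdiv2r ltr_nat.
Qed.

Lemma block_left (r e : nat) : (r <= e)%N -> block r e (r%:R / D).
Proof. by move=> le_re; apply/grid_blockP; rewrite lexx ler_pdiv2r ler_nat. Qed.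

Lemma block_left_le (r e r' e' : nat) :
  (r' <= e')%N -> block r e = block r' e' -> (r <= r')%N.
Proof.
move=> le_re' eq_blocks; have := block_left le_re'.
by rewrite -eq_blocks => /grid_blockP; rewrite ler_pdiv2r ler_nat => /andP[].
Qed.

Lemma run_start_lt (r : nat) : run_start r -> (r < N)%N.
Proof. by case/andP=> kr _; rewrite ltnNge; apply: contraTN kr => /kept_ge->. Qed.

Definition run_starts : seq nat := [seq r <- index_iota 0 N | run_start r].

Definition run_component (i : nat) : set R :=
  connected_component union ((nth 0 run_starts i)%:R / D).

Lemma run_component_block (i : nat) : (i < size run_starts)%N ->
  exists e, maximal_run (nth 0 run_starts i) e /\
            run_component i = block (nth 0 run_starts i) e.
Proof.
move=> lt_i; set r := nth 0 run_starts i.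
have : r \in run_starts by apply: mem_nth.
rewrite mem_filter => /andP[start_r _].
have [e [ke le_re kept_re]] := run_end_exists r.
have run : maximal_run r e by [].
by exists e; split=> //; apply: connected_component_run => //; apply: block_left.
Qed.

Lemma components_union : components union = run_component @` `I_(size run_starts).
Proof.
apply/seteqP; split=> C.
  case=> x ux <-; have [r [e [run bx]]] := in_union_run ux.
  have r_in : r \in run_starts.
    by case: run => start_r _ _ _; rewrite mem_filter start_r mem_index_iota run_start_lt.
  exists (index r run_starts); first by rewrite /= index_mem.
  have [_ _ le_re _] := run.
  rewrite /run_component nth_index // (connected_component_run run bx).
  exact: connected_component_run run (block_left le_re).
case=> i /= lt_i <-; have [e [run ->]] := run_component_block lt_i.
have [_ _ le_re kept_re] := run; have bl := block_left le_re.
exists ((nth 0 run_starts i)%:R / D); last exact: connected_component_run.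
exact: (block_sub_union (maximal_run_lt run) kept_re).
Qed.

Lemma run_component_inj : {in `I_(size run_starts) &, injective run_component}.
Proof.
move=> i i'; rewrite !inE /= => lt_i lt_i' eq_C.
have [e [[_ _ le_re _] Ci]] := run_component_block lt_i.
have [e' [[_ _ le_re' _] Ci']] := run_component_block lt_i'.
have uniq_runs : uniq run_starts by rewrite filter_uniq ?iota_uniq.
apply/eqP; rewrite -(nth_uniq 0 lt_i lt_i' uniq_runs) eqn_leq.
have eq_blocks : block (nth 0 run_starts i) e = block (nth 0 run_starts i') e'.
  by rewrite -Ci -Ci' eq_C.
by rewrite (block_left_le le_re' eq_blocks) (block_left_le le_re (esym eq_blocks)).
Qed.

Lemma V0_union : V0 union = count run_start (index_iota 0 N).
Proof.
have card_comps : (components union #= `I_(size run_starts))%card.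
  by rewrite components_union; apply: inj_card_eq; exact: run_component_inj.
rewrite /V0 -size_filter; apply: xget_unique => // k /= card_k.
by apply/card_eq_II; apply: card_eq_trans (card_esym card_k) card_comps.
Qed.

Lemma count_kept_iota (m : nat) :
  count kept (iota 0 m.+1) =
  (count run_start (iota 0 m.+1) + count (fun j => kept j && kept j.+1) (iota 0 m))%N.
Proof.
elim: m => [|m IHm]; first by rewrite /= /run_start; case: (kept 0).
rewrite -[m.+2]addn1 iotaD !count_cat IHm -[m.+1]addn1 iotaD !count_cat /= /run_start /=.
rewrite !add0n addn1 /=.
by case: (kept m); case: (kept m.+1) => /=; lia.
Qed.

Lemma count_kept_runs :
  count kept (index_iota 0 N) =
  (count run_start (index_iota 0 N) + count (fun j => kept j && kept j.+1) (index_iota 0 N))%N.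
Proof.
have := count_kept_iota N; rewrite /index_iota subn0 -addn1 iotaD !count_cat /=.
by rewrite /run_start kept_ge //= !addn0.
Qed.

Lemma V0_union_count :
  (V0 union)%:R = (count kept (index_iota 0 N))%:R
                  - (count (fun j => kept j && kept j.+1) (index_iota 0 N))%:R :> R.
Proof. by rewrite V0_union count_kept_runs natrD addrK. Qed.

Definition closed_cell (k : nat) : set R := if kept k then block k k.+1 else set0.
Definition open_cell (k : nat) : set R :=
  if kept k then [set` `[k%:R / D, k.+1%:R / D[%R] else set0.

Lemma closed_cell_measurable (k : nat) : measurable (closed_cell k).
Proof. by rewrite /closed_cell; case: (kept k) => //; exact: measurable_itv. Qed.

Lemma open_cell_measurable (k : nat) : measurable (open_cell k).
Proof. by rewrite /open_cell; case: (kept k) => //; exact: measurable_itv. Qed.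

Lemma lebesgue_measure_grid_cell (b : bool) (k : nat) :
  lebesgue_measure [set` Interval (BLeft (k%:R / D)) (BSide b (k.+1%:R / D))] = (D^-1)%:E.
Proof.
case: b; rewrite lebesgue_measure_itv /= lte_fin ltr_pdiv2r ltr_nat ltnSn;
  by rewrite -EFinB -mulrBl -natrB // subSnn mul1r.
Qed.

Lemma lebesgue_measure_closed_cell (k : nat) :
  lebesgue_measure (closed_cell k) = ((kept k)%:R / D)%:E.
Proof.
rewrite /closed_cell; case: (kept k); rewrite ?measure0 ?mul0r // mul1r.
exact: (lebesgue_measure_grid_cell false).
Qed.

Lemma lebesgue_measure_open_cell (k : nat) :
  lebesgue_measure (open_cell k) = ((kept k)%:R / D)%:E.
Proof.
rewrite /open_cell; case: (kept k); rewrite ?measure0 ?mul0r // mul1r.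
exact: (lebesgue_measure_grid_cell true).
Qed.

Lemma union_bigsetU : union = \big[setU/set0]_(k < N) closed_cell k.
Proof.
rewrite -bigcup_mkord; apply/seteqP; split=> t.
  move=> [j /= kj bt]; exists j; last by rewrite /closed_cell kj.
  by rewrite /= ltnNge; apply: contraTN kj => /kept_ge->.
by move=> [j _]; rewrite /closed_cell; case kj: (kept j) => // bt; exists j.
Qed.

Lemma bigsetU_open_cell_sub : \big[setU/set0]_(k < N) open_cell k `<=` union.
Proof.
rewrite -bigcup_mkord => t [j _]; rewrite /open_cell; case kj: (kept j) => //=.
rewrite in_itv /= => /andP[le_jt lt_tS].
by exists j => //; apply/grid_blockP; rewrite le_jt ltW.
Qed.

Lemma open_cell_trivIset : trivIset setT open_cell.
Proof.
move=> i j _ _ [t []]; rewrite /open_cell; case: (kept i); case: (kept j) => //=.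
rewrite !in_itv /= => /andP[le_it lt_tSi] /andP[le_jt lt_tSj].
have lt_iSj : (i < j.+1)%N by rewrite -(ltr_nat R) -ltr_pdiv2r (le_lt_trans le_it lt_tSj).
have lt_jSi : (j < i.+1)%N by rewrite -(ltr_nat R) -ltr_pdiv2r (le_lt_trans le_jt lt_tSi).
lia.
Qed.

Lemma lebesgue_measure_union :
  lebesgue_measure union = ((count kept (index_iota 0 N))%:R / D)%:E.
Proof.
have sum_cells : (\sum_(k < N) ((kept k)%:R / D)%:E)%E =
                 ((count kept (index_iota 0 N))%:R / D)%:E.
  by rewrite sumEFin -mulr_suml natr_count big_mkord.
have sum_closed : (\sum_(k < N) lebesgue_measure (closed_cell k))%E =
                  ((count kept (index_iota 0 N))%:R / D)%:E.
  by under eq_bigr do rewrite lebesgue_measure_closed_cell.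
have sum_open : (\sum_(k < N) lebesgue_measure (open_cell k))%E =
                ((count kept (index_iota 0 N))%:R / D)%:E.
  by under eq_bigr do rewrite lebesgue_measure_open_cell.
have union_measurable : measurable union.
  by rewrite union_bigsetU; apply: bigsetU_measurable => k _; exact: closed_cell_measurable.
apply/eqP; rewrite eq_le; apply/andP; split.
  rewrite -sum_closed union_bigsetU.
  apply: content_subadditive => [k _||//]; first exact: closed_cell_measurable.
  by apply: bigsetU_measurable => k _; exact: closed_cell_measurable.
rewrite -sum_open.
rewrite -(@measure_bigsetU _ _ _ lebesgue_measure _ open_cell_measurable open_cell_trivIset).
apply: le_measure; last exact: bigsetU_open_cell_sub; rewrite inE //.
by apply: bigsetU_measurable => k _; exact: open_cell_measurable.
Qed.

End Grid.

Lemma fpK_grid_union (R : realType) (M n : nat) (w : fpConf M n) :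
  fpK w = grid_union (M%:R ^+ n : R) (survives w).
Proof.
apply/seteqP; split=> t [j /= kj bt].
  by exists (val j); rewrite //= /survives ltn_ord -fpKept_ancestors.
case/andP: kj => ltjN kj; exists (Ordinal ltjN) => //=.
by rewrite fpKept_ancestors.
Qed.

Theorem proposition4p2 (R : realType) (M : nat) (p : R) (n : nat) :
  (2 <= M)%N -> 0 <= p -> p <= 1 ->
  fpE p (fun w : fpConf M n => V1 (@fpK R M n w)) = p ^+ n /\
  fpE p (fun w : fpConf M n => ((V0 (@fpK R M n w))%:R : R)) =
    (M%:R * p) ^+ n *
      (1 - (M%:R - 1) * p / (M%:R - p) * (1 - (p / M%:R) ^+ n)).
Proof.
move=> M_ge2 _ p_le1; have M_gt0 : (0 < M)%N := ltnW M_ge2.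
have D_gt0 : 0 < M%:R ^+ n :> R by rewrite exprn_gt0 // ltr0n.
have V1_count (w : fpConf M n) :
    V1 (fpK w) = (count (survives w) (index_iota 0 (M ^ n)))%:R / M%:R ^+ n :> R.
  by rewrite /V1 fpK_grid_union (lebesgue_measure_union D_gt0 (@survives_ge _ _ w)).
split; first by rewrite (eq_fpE p V1_count) fpEMr E_count_survivors // natrX mulrC mulKf ?gt_eqF.
under eq_fpE => w do rewrite fpK_grid_union (V0_union_count D_gt0 (@survives_ge _ _ w)).
rewrite fpEB E_count_survivors // E_count_adjacent // natrX -exprMn.
have [m eM] : exists m, M = m.+1 by exists M.-1; lia.
by rewrite eM adjacent_weight_closed // subr_eq0 gt_eqF // (le_lt_trans p_le1) // -eM ltr1n.
Qed.
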